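(* Let $uv\in E(G)$. If $\phi$ is a cheapest $(T_1,T_2)$-extension of $G - {uv}$ and $u$ and $v$ are in the same good component of $\phi$, then $uv$ is irrelevant.
   Context: $(G,k,t,T_1,T_2)$ is an instance of the Cheap Coloring Extension problem: $G$ is a bipartite graph, $T_1,T_2$ are disjoint vertex sets with $|T_1|+|T_2|\le t$, and one asks for a $(T_1,T_2)$-extension of cost at most $k$. A 2-coloring of $G$ is any function $\phi: V(G)\to\{1,2\}$; it is a $(T_1,T_2)$-extension if it colors $T_1$ with 1 and $T_2$ with 2. Its cost is $\sum_X(|X|-1)$ over the monochromatic components $X$ (connected components of the subgraphs induced by each color class). A $(T_1,T_2)$-extension is cheapest if no $(T_1,T_2)$-extension has strictly lower cost. An edge $uv$ is good w.r.t. $\phi$ if $\phi(u)\neq\phi(v)$ and bad otherwise; a good component of $\phi$ is the vertex set of a connected component of the graph $(V(G),E')$ where $E'$ is the set of good edges. An edge $e$ is irrelevant if $G$ has a $(T_1,T_2)$-extension of cost at most $k$ if and only if $G-e$ does. *)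

From mathcomp Require Import all_boot.
Set Implicit Arguments. Unset Strict Implicit. Unset Printing Implicit Defensive.

Definition simple_graph (V : finType) (E : rel V) : Prop :=
  symmetric E /\ irreflexive E.

Definition bipartite (V : finType) (E : rel V) : Prop :=
  exists side : V -> bool, forall x y, E x y -> side x != side y.

Definition del_edge (V : finType) (E : rel V) (u v : V) : rel V :=
  fun x y => E x y && ~~ (((x == u) && (y == v)) || ((x == v) && (y == u))).

(* 2-colorings: phi : V -> bool; color 1 is [true], color 2 is [false]. *)
Definition coloring (V : finType) := V -> bool.

Definition is_extension (V : finType) (T1 T2 : {set V}) (phi : coloring V) :=
  (forall x, x \in T1 -> phi x = true) /\ (forall x, x \in T2 -> phi x = false).

Definition bad_rel (V : finType) (E : rel V) (phi : coloring V) : rel V :=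
  fun x y => E x y && (phi x == phi y).
Definition good_rel (V : finType) (E : rel V) (phi : coloring V) : rel V :=
  fun x y => E x y && (phi x != phi y).

(* monochromatic components: connected components of the subgraphs induced
   by the color classes, i.e. components of the graph of bad edges *)
Definition mono_comps (V : finType) (E : rel V) (phi : coloring V) : {set {set V}} :=
  [set [set y | connect (bad_rel E phi) x y] | x : V].

Definition cost (V : finType) (E : rel V) (phi : coloring V) : nat :=
  \sum_(X in mono_comps E phi) (#|X| - 1).

Definition cheapest_extension (V : finType) (E : rel V) (T1 T2 : {set V})
  (phi : coloring V) : Prop :=
  is_extension T1 T2 phi /\
  forall psi : coloring V, is_extension T1 T2 psi -> cost E phi <= cost E psi.

Definition has_cheap_extension (V : finType) (E : rel V) (k : nat)
  (T1 T2 : {set V}) : Prop :=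
  exists phi : coloring V, is_extension T1 T2 phi /\ cost E phi <= k.

Definition same_good_comp (V : finType) (E : rel V) (phi : coloring V) (u v : V) :=
  connect (good_rel E phi) u v.

Definition irrelevant_edge (V : finType) (E : rel V) (k : nat)
  (T1 T2 : {set V}) (u v : V) : Prop :=
  has_cheap_extension E k T1 T2 <-> has_cheap_extension (del_edge E u v) k T1 T2.

(* Since cost is #|V| minus the number of monochromatic components, deleting
   an edge can only lower the cost of any coloring, so a cheap extension of G
   is one of G - uv.  Conversely, fix a bipartition [side] of G: along a good
   edge both [phi] and [side] flip, so [phi x (+) side x] is constant on good
   components.  As u and v are adjacent in G they lie on different sides, hence
   get different colors under [phi]; thus uv is not monochromatic, [phi] has
   the same cost on G and on G - uv, and that cost is at most the cost of any
   extension of G - uv. *)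

From mathcomp Require Import all_boot.
Set Implicit Arguments. Unset Strict Implicit. Unset Printing Implicit Defensive.

Section Components.
Variable V : finType.
Implicit Types (e : rel V) (x y : V).

Definition comps e : {set {set V}} := [set [set y | connect e x y] | x : V].

Lemma comps_partition e : connect_sym e -> partition (comps e) [set: V].
Proof.
move=> sym_e.
have -> : comps e = equivalence_partition (connect e) [set: V].
  apply/setP => X; apply/imsetP/imsetP => -[x _ ->]; exists x => //;
  by apply/setP => y; rewrite !inE.
apply: equivalence_partitionP => x y z _ _ _; split; first exact: connect0.
move=> cxy; apply/idP/idP; last exact: connect_trans.
by apply: connect_trans; rewrite sym_e.
Qed.

Lemma comps_sub_card e e' :
  subrel e' e -> connect_sym e -> #|comps e| <= #|comps e'|.
Proof.
move=> sub_e' sym_e.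
pose coarsen (Y : {set V}) := [set z | [exists y in Y, connect e y z]].
suff -> : comps e = coarsen @: comps e' by apply: leq_imset_card.
rewrite /comps -imset_comp; apply: eq_imset => x; apply/setP => z.
rewrite !inE; apply/idP/existsP => [cxz | [y /andP []]].
  by exists x; rewrite inE connect0.
rewrite inE => /(connect_sub (fun a b eab => connect1 (sub_e' a b eab))).
exact: connect_trans.
Qed.

End Components.

Lemma sum_card_pred_partition (T : finType) (P : {set {set T}}) (A : {set T}) :
  partition P A -> \sum_(X in P) (#|X| - 1) = #|A| - #|P|.
Proof.
move=> partP; rewrite (card_partition partP) -sum1_card.
have -> : \sum_(X in P) #|X| = \sum_(X in P) (#|X| - 1) + \sum_(X in P) 1.
  rewrite -big_split; apply: eq_bigr => X PX /=; rewrite subnK // card_gt0.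
  by apply: contraTneq PX => ->; rewrite (partition0 partP).
by rewrite addnK.
Qed.

Lemma cost_comps (V : finType) (E : rel V) (phi : coloring V) :
  symmetric E -> cost E phi = #|V| - #|comps (bad_rel E phi)|.
Proof.
move=> symE; rewrite -cardsT -(sum_card_pred_partition (comps_partition _)) //.
by apply: sym_connect_sym => x y; rewrite /bad_rel symE eq_sym.
Qed.

Lemma cost_subrel (V : finType) (E E' : rel V) (phi : coloring V) :
  symmetric E -> symmetric E' -> subrel E' E -> cost E' phi <= cost E phi.
Proof.
move=> symE symE' subE; rewrite !cost_comps //; apply/leq_sub2l/comps_sub_card.
  by move=> x y /andP [/subE Exy eq_phi]; rewrite /bad_rel Exy.
by apply: sym_connect_sym => x y; rewrite /bad_rel symE eq_sym.
Qed.

Lemma good_connect_parity (V : finType) (E : rel V) (phi : coloring V)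
    (side : V -> bool) x y :
  (forall a b, E a b -> side a != side b) ->
  connect (good_rel E phi) x y -> phi x (+) side x = phi y (+) side y.
Proof.
move=> side_edge cxy.
have parity_closed : closed (good_rel E phi) [pred z | phi z (+) side z == phi x (+) side x].
  move=> a b /andP [/side_edge sab phi_ab] /=; congr (_ == _).
  by move: sab phi_ab; case: (phi a); case: (phi b); case: (side a); case: (side b).
by have := closed_connect parity_closed cxy; rewrite !inE eqxx => /esym/eqP.
Qed.

Lemma subrel_del_edge (V : finType) (E : rel V) u v : subrel (del_edge E u v) E.
Proof. by move=> x y /andP []. Qed.

Lemma del_edge_sym (V : finType) (E : rel V) u v :
  symmetric E -> symmetric (del_edge E u v).
Proof.
move=> symE x y; rewrite /del_edge symE; congr (_ && ~~ _).
by case: (x == u); case: (y == v); case: (x == v); case: (y == u).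
Qed.

Lemma bad_rel_del_good_edge (V : finType) (E : rel V) (phi : coloring V) u v :
  phi u != phi v -> bad_rel (del_edge E u v) phi =2 bad_rel E phi.
Proof.
move=> phi_uv x y; rewrite /bad_rel /del_edge; case: (E x y) => //=.
case: (phi x =P phi y) => [phi_xy | _]; last by rewrite andbF.
rewrite andbT; apply/negP => /orP [] /andP [/eqP xu /eqP yv];
  by move: phi_uv; rewrite -xu -yv phi_xy eqxx.
Qed.

Lemma cost_del_good_edge (V : finType) (E : rel V) (phi : coloring V) u v :
  phi u != phi v -> cost (del_edge E u v) phi = cost E phi.
Proof.
move=> phi_uv; rewrite /cost.
suff -> : mono_comps (del_edge E u v) phi = mono_comps E phi by [].
apply: eq_imset => x; apply/setP => y.
by rewrite !inE (eq_connect (bad_rel_del_good_edge E phi_uv)).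
Qed.

Theorem mainTheorem6 (V : finType) (E : rel V) (k t : nat) (T1 T2 : {set V})
  (u v : V) (phi : coloring V) :
  simple_graph E -> bipartite E ->
  [disjoint T1 & T2] -> #|T1| + #|T2| <= t ->
  E u v ->
  cheapest_extension (del_edge E u v) T1 T2 phi ->
  same_good_comp (del_edge E u v) phi u v ->
  irrelevant_edge E k T1 T2 u v.
Proof.
move=> [symE _] [side side_edge] _ _ Euv [ext_phi phi_cheapest] good_uv.
split=> [[psi [ext_psi cost_psi]] | [psi [ext_psi cost_psi]]].
  exists psi; split=> //; apply: leq_trans cost_psi.
  exact: cost_subrel (del_edge_sym u v symE) (@subrel_del_edge _ E u v).
have phi_uv : phi u != phi v.
  have := good_connect_parity
    (fun a b Eab => side_edge a b (subrel_del_edge Eab)) good_uv.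
  by have := side_edge u v Euv; case: (phi u); case: (phi v); case: (side u); case: (side v).
exists phi; split=> //; rewrite -(cost_del_good_edge E phi_uv).
exact: leq_trans (phi_cheapest psi ext_psi) cost_psi.
Qed.
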